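(* Let $(G,\omega)$ be a weighted graph with $n$ vertices and total weight $N=\sum_{v\in V(G)}\omega(v)$. Then $\tau_{(G,\omega)}=(x-1)^{N-n}\tau_G$, where $\tau_G$ is the tree polynomial of the underlying unweighted graph $G$; moreover $\tau_G(1)\ne0$, so the largest integer $k$ with $(x-1)^k\mid\tau_{(G,\omega)}$ is $k=N-n$ (the excess weight).
   Context: A weighted graph $(G,\omega)$ is a finite simple graph with $\omega:V(G)\to\{1,2,\dots\}$, and $X_{(G,\omega)}=\sum_\kappa\prod_{v}x_{\kappa(v)}^{\omega(v)}$ over proper colourings $\kappa:V(G)\to\{1,2,\dots\}$; the unweighted $X_G$ is the case $\omega\equiv1$. $P_\lambda$ is the disjoint union of paths with $\lambda_1,\dots,\lambda_{\ell(\lambda)}$ vertices; $\{X_{P_\lambda}\}$ is a basis of the symmetric functions over $\mathbb{Q}$. For $f=\sum_\lambda a_\lambda X_{P_\lambda}$, $\tau_f(x)=\sum_\lambda a_\lambda x^{\ell(\lambda)}$; $\tau_{(G,\omega)}=\tau_{X_{(G,\omega)}}$ and $\tau_G=\tau_{X_G}$. *)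

From HB Require Import structures.
From mathcomp Require Import all_boot all_order all_algebra.
From mathcomp Require Import mpoly.
From Stdlib Require Import ClassicalEpsilon.

Set Implicit Arguments.
Unset Strict Implicit.
Unset Printing Implicit Defensive.

Import GRing.Theory.
Local Open Scope ring_scope.

Definition simple_graph (V : finType) (e : rel V) : Prop :=
  ssrbool.symmetric e /\ ssrbool.irreflexive e.

(* Proper colourings with colours in 'I_M (colours 1..M shifted to 0..M-1). *)
Definition proper (V : finType) (e : rel V) (M : nat) (k : {ffun V -> 'I_M}) : bool :=
  [forall u, forall v, e u v ==> (k u != k v)].

(* Chromatic symmetric function of (G, w), truncated to M variables x_0..x_{M-1}. *)
Definition chromX (V : finType) (e : rel V) (w : V -> nat) (M : nat) : {mpoly rat[M]} :=
  \sum_(k : {ffun V -> 'I_M} | proper e k) \prod_(v : V) 'X_(k v) ^+ w v.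

Definition is_partition (d : nat) (la : seq nat) : bool :=
  sorted geq la && all (fun i => 0 < i)%N la && (sumn la == d).

(* The path forest P_la: vertices 0..|la|-1, blocks [s_i, s_{i+1}) with s_i the partial
   sums of la; j ~ j+1 iff j+1 is not a block boundary. *)
Definition psums (la : seq nat) : seq nat :=
  [seq sumn (take i la) | i <- iota 0 (size la).+1].

Definition path_rel (la : seq nat) : rel 'I_(sumn la) :=
  fun j k => ((k == j.+1 :> nat) || (j == k.+1 :> nat)) && (maxn j k \notin psums la).

Definition pathX (M : nat) (la : seq nat) : {mpoly rat[M]} :=
  chromX (@path_rel la) (fun _ => 1%N) M.

Definition path_expansion (d : nat) (f : {mpoly rat[d]}) (c : seq (seq nat * rat)) : Prop :=
  all (is_partition d) (unzip1 c) /\ f = \sum_(p <- c) p.2 *: pathX d p.1.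

(* tau_f(x) = sum_la a_la x^{l(la)}, for f homogeneous of degree d. *)
Definition tau (d : nat) (f : {mpoly rat[d]}) : {poly rat} :=
  match excluded_middle_informative (exists c, path_expansion f c) with
  | left h => let c := proj1_sig (constructive_indefinite_description _ h) in
              \sum_(p <- c) p.2 *: 'X^(size p.1)
  | right _ => 0
  end.

Definition total_weight (V : finType) (w : V -> nat) : nat := (\sum_(v : V) w v)%N.

Definition tau_w (V : finType) (e : rel V) (w : V -> nat) : {poly rat} :=
  tau (chromX e w (total_weight w)).

Definition tau_G (V : finType) (e : rel V) : {poly rat} :=
  tau (chromX e (fun _ => 1%N) #|V|).

(* Stanley's expansion writes X_(G,w) as a signed sum, over edge subsets S, of products of
   power sums p_(w(C)) over the components C of (V, S).  Setting t variables to 1 and the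
   others to 0 sends every power sum to t, so X_(G,w)(1^t) = chi_G(t) does not depend on w.
   Expanding the same identity for a path shows that each p_n, hence X_(G,w), lies in the
   span of the X_(P_la) with |la| = N, and X_(P_la)(1^t) = prod_i t (t - 1)^(la_i - 1).  The
   substitution x |-> x / (x - 1), scaled by (x - 1)^N, sends that product to x^(l(la)), so
   tau_(G,w)(x) = (x - 1)^N chi_G(x / (x - 1)).  As deg chi_G = n, this is (x - 1)^(N - n)
   tau_G(x), and tau_G(1) is the leading coefficient 1 of chi_G. *)

From Pilot Require Import Defs.
From HB Require Import structures.
From mathcomp Require Import all_boot all_order all_algebra.
From mathcomp Require Import mpoly.
From mathcomp Require Import zify ring.
From Stdlib Require Import ClassicalEpsilon.

Set Implicit Arguments.
Unset Strict Implicit.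
Unset Printing Implicit Defensive.

Import GRing.Theory.
Local Open Scope ring_scope.

Definition power_sum (M m : nat) : {mpoly rat[M]} := \sum_(i < M) 'X_i ^+ m.

Section Fibres.
Variables (V : finType) (rho : V -> V).
Hypothesis rhoK : forall v, rho (rho v) = rho v.

Definition fixpoint := {r : V | rho r == r}.
Definition to_fixpoint (v : V) : fixpoint := exist _ (rho v) (introT eqP (rhoK v)).

Lemma sum_fibre_constant_monomials (w : V -> nat) (M : nat) :
  \sum_(k : {ffun V -> 'I_M} | [forall v, k v == k (rho v)]) \prod_v 'X_(k v) ^+ w v
  = \prod_(r : fixpoint) power_sum M (\sum_(v | rho v == val r) w v).
Proof.
rewrite /power_sum bigA_distr_bigA.
pose lift_col (g : {ffun fixpoint -> 'I_M}) : {ffun V -> 'I_M} := [ffun v => g (to_fixpoint v)].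
pose restr_col (k : {ffun V -> 'I_M}) : {ffun fixpoint -> 'I_M} := [ffun r => k (val r)].
rewrite (reindex_onto lift_col restr_col); last first.
  by move=> k /forallP Hk; apply/ffunP => v; rewrite !ffunE /= (eqP (Hk v)).
apply: eq_big => [g|g _].
  apply/andP; split.
    apply/forallP => v; rewrite !ffunE; apply/eqP; congr (g _); apply: val_inj => /=.
    by rewrite rhoK.
  apply/eqP/ffunP => r; rewrite !ffunE; congr (g _); apply: val_inj => /=.
  exact/eqP/(valP r).
rewrite (partition_big to_fixpoint xpredT) //=.
apply: eq_bigr => r _; rewrite -prodrXr; apply: eq_big => v.
  by rewrite -(inj_eq val_inj).
by move=> /eqP <-; rewrite ffunE.
Qed.

Lemma sum_fibre_weights (w : V -> nat) :
  (\sum_(r : fixpoint) \sum_(v | rho v == val r) w v)%N = (\sum_v w v)%N.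
Proof. by rewrite [RHS](partition_big to_fixpoint xpredT). Qed.

Lemma fibre_weight_gt0 (w : V -> nat) (r : fixpoint) :
  (forall v, 0 < w v)%N -> (0 < \sum_(v | rho v == val r) w v)%N.
Proof. by move=> w_gt0; rewrite (bigD1 (val r)) ?ltn_addr //=; exact: (valP r). Qed.

End Fibres.

Lemma prodr_natb (R : comNzRingType) (I : finType) (b : I -> bool) :
  \prod_(i : I) ((b i)%:R : R) = ([forall i, b i])%:R.
Proof.
case: (boolP [forall i, b i]) => [/forallP H|/forallPn [i Hi]].
  by rewrite big1 // => i _; rewrite H.
by rewrite (bigD1 i) //= (negbTE Hi) mul0r.
Qed.

Definition ones (M t : nat) : 'I_M -> rat := fun i => ((i < t)%N)%:R.

Lemma meval_ones_power_sum M m t :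
  (0 < m)%N -> (t <= M)%N -> (power_sum M m).@[@ones M t] = t%:R.
Proof.
move=> m_gt0 tM; rewrite /power_sum raddf_sum /=.
under eq_bigr => i _ do rewrite rmorphXn /= mevalXU /ones -natrX.
rewrite -natr_sum; congr (_%:R).
transitivity (\sum_(i < M | (i < t)%N) 1)%N.
  by rewrite [RHS]big_mkcond /=; apply: eq_bigr => i _; case: (i < t)%N; rewrite ?exp1n ?exp0n.
by rewrite -(big_ord_widen_cond M xpredT (fun _ => 1%N) tM) /= sum1_card card_ord.
Qed.

Section Stanley.
Variables (V : finType) (e : rel V) (E : {set V * V}).
Hypothesis properE : forall M (k : {ffun V -> 'I_M}),
  Defs.proper e k = [forall p in E, k p.1 != k p.2].
Implicit Types S : {ffun V * V -> bool}.

(* A spanning subgraph is a subset [S] of the oriented edges [V * V]; its components are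
   represented by the roots of the connectivity relation. *)
Definition span_rel S : rel V := fun u v => S (u, v) || S (v, u).
Definition comp_root S := fingraph.root (span_rel S).
Definition edge_sign S : rat := \prod_(p : V * V) (if S p then -1 else 1).
Definition sub_edges S := [forall p, S p ==> (p \in E)].

Lemma span_rel_connect_sym S : connect_sym (span_rel S).
Proof. by apply: sym_connect_sym => u v; rewrite /span_rel orbC. Qed.

Lemma comp_rootK S v : comp_root S (comp_root S v) = comp_root S v.
Proof. exact: (fingraph.root_root (span_rel_connect_sym S)). Qed.

Lemma comp_rootP S u v :
  reflect (comp_root S u = comp_root S v) (connect (span_rel S) u v).
Proof. exact: (fingraph.rootP (span_rel_connect_sym S)). Qed.

Lemma edge_sign_sqr S : edge_sign S * edge_sign S = 1.
Proof.
rewrite /edge_sign -big_split /=; apply: big1 => p _.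
by case: (S p); rewrite ?mulrNN mulr1.
Qed.

Lemma constant_on_edgesE S M (k : {ffun V -> 'I_M}) :
  [forall p, S p ==> (k p.1 == k p.2)] = [forall v, k v == k (comp_root S v)].
Proof.
apply/forallP/forallP => H.
  move=> v; have cl : closed (span_rel S) [pred u | k u == k v].
    by move=> x y; rewrite !inE /span_rel => /orP[] Sxy; have /= /eqP -> := implyP (H _) Sxy.
  have := closed_connect cl (fingraph.connect_root (span_rel S) v).
  by rewrite !inE eqxx => /esym /eqP ->.
case=> u v; apply/implyP => Suv /=.
have /comp_rootP Ruv : connect (span_rel S) u v.
  by apply: connect1; rewrite /span_rel Suv.
by rewrite (eqP (H u)) (eqP (H v)) Ruv.
Qed.

(* Inclusion-exclusion over the edges violated by [k]. *)
Lemma natr_proper_expansion M (k : {ffun V -> 'I_M}) :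
  ((Defs.proper e k)%:R : rat) =
  \sum_(S | sub_edges S) edge_sign S * ([forall p, S p ==> (k p.1 == k p.2)])%:R.
Proof.
pose a p := (p \in E) && (k p.1 == k p.2).
have -> : Defs.proper e k = [forall p, ~~ a p].
  by rewrite properE; apply/forallP/forallP => H p; move: (H p); rewrite /a; case: (p \in E).
rewrite -prodr_natb.
transitivity (\prod_(p : V * V) \sum_(b : bool) (if b then - (a p)%:R else 1 : rat)).
  by apply: eq_bigr => p _; rewrite big_bool /=; case: (a p); rewrite ?subr0 // addrC subrr.
rewrite bigA_distr_bigA /= (bigID sub_edges) /= [X in _ + X]big1 ?addr0.
  apply: eq_bigr => S sS.
  rewrite /edge_sign -prodr_natb -big_split /=; apply: eq_bigr => p _.
  move/forallP: sS => /(_ p); rewrite /a.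
  by case: (S p) => //= ->; rewrite mulN1r.
move=> S /forallPn [p]; rewrite negb_imply => /andP [Sp pE].
by rewrite (bigD1 p) //= Sp /a (negbTE pE) /= oppr0 mul0r.
Qed.

Theorem chromX_stanley (w : V -> nat) M :
  chromX e w M = \sum_(S | sub_edges S) edge_sign S *:
     \prod_(r : fixpoint (comp_root S)) power_sum M (\sum_(v | comp_root S v == val r) w v).
Proof.
rewrite /chromX; symmetry.
under eq_bigr => S _ do
  rewrite -(sum_fibre_constant_monomials (comp_rootK S)) big_mkcond scaler_sumr.
rewrite exchange_big /= [RHS]big_mkcond /=.
apply: eq_bigr => k _.
transitivity (\sum_(S | sub_edges S)
  (edge_sign S * ([forall p, S p ==> (k p.1 == k p.2)])%:R) *: \prod_v 'X_(k v) ^+ w v).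
  apply: eq_bigr => S _; rewrite -constant_on_edgesE.
  by case: ifP => _; rewrite ?mulr1 ?mulr0 ?scale0r ?scaler0.
by rewrite -scaler_suml -natr_proper_expansion; case: (Defs.proper e k); rewrite ?scale1r ?scale0r.
Qed.


(* Stanley's expansion at [ones M t]: every power sum becomes [t], so each edge subset
   contributes [t] to the power of its number of components. *)
Definition chrom_poly : {poly rat} :=
  \sum_(S | sub_edges S) edge_sign S *: 'X^#|[pred r | comp_root S r == r]|.

Lemma meval_ones_chromX (w : V -> nat) M t :
  (forall v, 0 < w v)%N -> (t <= M)%N -> (chromX e w M).@[@ones M t] = chrom_poly.[t%:R].
Proof.
move=> w_gt0 tM; rewrite chromX_stanley /chrom_poly horner_sum.
rewrite (big_morph (meval (@ones M t)) (mevalD _) (meval0 _)); apply: eq_bigr => S _.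
rewrite mevalZ hornerZ (big_morph (meval (@ones M t)) (mevalM _) (meval1 _)) hornerXn.
under eq_bigr => r _ do rewrite meval_ones_power_sum ?fibre_weight_gt0 //.
by rewrite prodr_const -card_sig cardT.
Qed.

Lemma coef_chrom_poly j :
  chrom_poly`_j = \sum_(S | sub_edges S) edge_sign S * (j == #|[pred r | comp_root S r == r]|)%:R.
Proof. by rewrite /chrom_poly coef_sum; apply: eq_bigr => S _; rewrite coefZ coefXn. Qed.

Lemma size_chrom_poly : (size chrom_poly <= #|V|.+1)%N.
Proof.
apply/leq_sizeP => j hj; rewrite coef_chrom_poly big1 // => S _.
case: eqP => [hc|_]; last by rewrite mulr0.
by have := max_card [pred r | comp_root S r == r]; rewrite -hc leqNgt hj.
Qed.

Lemma comp_root_nil v : comp_root [ffun=> false] v = v.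
Proof.
have := fingraph.connect_root (span_rel [ffun=> false]) v.
rewrite /comp_root; case/connectP => -[|y p] /=; first by move=> _ ->.
by rewrite /span_rel !ffunE.
Qed.

(* Only the empty edge set leaves all [#|V|] vertices isolated. *)
Lemma lead_coef_chrom_poly :
  (forall p, p \in E -> p.1 != p.2) -> chrom_poly`_#|V| = 1.
Proof.
move=> E_loopless; rewrite coef_chrom_poly (bigD1 [ffun => false]) /=; last first.
  by apply/forallP => p; rewrite ffunE.
rewrite big1 ?addr0.
  rewrite /edge_sign big1 ?mul1r; last by move=> p _; rewrite ffunE.
  have all_fixed : [pred r | comp_root [ffun=> false] r == r] =i predT.
    by move=> r; rewrite !inE comp_root_nil eqxx.
  by rewrite (eq_cardT all_fixed) -cardT eqxx.
move=> S /andP [sS nS]; case: eqP => [hc|_]; last by rewrite mulr0.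
have rootS r : comp_root S r = r.
  have H : [pred r | comp_root S r == r] =i predT.
    by apply/(subset_cardP _)/subset_predT; rewrite -hc cardT.
  by apply/eqP; have := H r; rewrite !inE.
have [p Sp] : exists p, S p.
  apply/existsP; apply: contraR nS => /existsPn H.
  by apply/eqP/ffunP => p; rewrite ffunE; apply/negbTE/H.
have /comp_rootP : connect (span_rel S) p.1 p.2.
  by apply: connect1; rewrite /span_rel -surjective_pairing Sp.
by rewrite !rootS => /eqP; rewrite (negbTE (E_loopless _ (implyP (forallP sS p) Sp))).
Qed.

End Stanley.

Lemma chromX_bij (V1 V2 : finType) (e1 : rel V1) (e2 : rel V2) (w1 : V1 -> nat)
  (w2 : V2 -> nat) (h : V1 -> V2) M :
  bijective h -> (forall u v, e2 (h u) (h v) = e1 u v) -> (forall v, w2 (h v) = w1 v) ->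
  chromX e1 w1 M = chromX e2 w2 M.
Proof.
case=> h' hK h'K he hw.
pose transport (k1 : {ffun V1 -> 'I_M}) : {ffun V2 -> 'I_M} := [ffun v2 => k1 (h' v2)].
have transport_bij : bijective transport.
  exists (fun k2 : {ffun V2 -> 'I_M} => [ffun v1 => k2 (h v1)]).
    by move=> k1; apply/ffunP => v; rewrite !ffunE hK.
  by move=> k2; apply/ffunP => v; rewrite !ffunE h'K.
rewrite /chromX (reindex transport) /=; last exact: onW_bij.
apply: eq_big => k1.
  apply/forallP/forallP => H u; apply/forallP => v; apply/implyP => euv.
    by have := implyP (forallP (H (h' u)) (h' v)); rewrite -he !h'K !ffunE; exact.
  by have := implyP (forallP (H (h u)) (h v)); rewrite he !ffunE !hK; exact.
move=> _; rewrite (reindex h) /=; last by apply: onW_bij; exists h'.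
by apply: eq_bigr => v _; rewrite ffunE hK hw.
Qed.

Definition sum_rel (V1 V2 : finType) (e1 : rel V1) (e2 : rel V2) : rel (V1 + V2) :=
  fun x y => match x, y with
             | inl a, inl b => e1 a b
             | inr a, inr b => e2 a b
             | _, _ => false end.

Definition sum_weight (V1 V2 : finType) (w1 : V1 -> nat) (w2 : V2 -> nat) (x : V1 + V2) :=
  match x with inl a => w1 a | inr b => w2 b end.

Lemma chromX_sum_rel (V1 V2 : finType) (e1 : rel V1) (e2 : rel V2) (w1 : V1 -> nat)
  (w2 : V2 -> nat) M :
  chromX (sum_rel e1 e2) (sum_weight w1 w2) M = chromX e1 w1 M * chromX e2 w2 M.
Proof.
rewrite /chromX big_distrlr /= pair_big_dep /=.
pose glue (k : {ffun V1 -> 'I_M} * {ffun V2 -> 'I_M}) : {ffun V1 + V2 -> 'I_M} :=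
  [ffun x => match x with inl a => k.1 a | inr b => k.2 b end].
have glue_bij : bijective glue.
  exists (fun k : {ffun V1 + V2 -> 'I_M} => ([ffun a => k (inl a)], [ffun b => k (inr b)])).
    by case=> k1 k2; congr (_, _); apply/ffunP => v; rewrite !ffunE.
  by move=> k; apply/ffunP; case=> v; rewrite !ffunE.
rewrite (reindex glue) /=; last exact: onW_bij.
apply: eq_big => [[k1 k2]|[k1 k2] _].
  apply/forallP/andP => [H|[/forallP H1 /forallP H2]].
    split; apply/forallP => u; apply/forallP => v; apply/implyP => euv.
      by have := implyP (forallP (H (inl u)) (inl v)) euv; rewrite !ffunE.
    by have := implyP (forallP (H (inr u)) (inr v)) euv; rewrite !ffunE.
  case=> u; apply/forallP; case=> v; apply/implyP => //= euv; rewrite !ffunE /=.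
    exact: implyP (forallP (H1 u) v) euv.
  exact: implyP (forallP (H2 u) v) euv.
by rewrite big_sumType /=; congr (_ * _); apply: eq_bigr => v _; rewrite ffunE.
Qed.

Lemma chromX_card0 (V : finType) (e : rel V) (w : V -> nat) M :
  #|V| = 0%N -> chromX e w M = 1.
Proof.
move=> V0; have nV (v : V) : False by have := card0_eq V0 v; rewrite !inE.
rewrite /chromX (big_pred1 (ffun0 V0 : {ffun V -> 'I_M})).
  by rewrite big_pred0 // => v; case: (nV v).
move=> k /=; apply/idP/eqP => [_|_]; first by apply/ffunP => v; case: (nV v).
by apply/forallP => v; case: (nV v).
Qed.

Lemma eq_poly_on (R : idomainType) (p q : {poly R}) (s : seq R) :
  uniq s -> (size p <= size s)%N -> (size q <= size s)%N ->
  {in s, forall x, p.[x] = q.[x]} -> p = q.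
Proof.
move=> s_uniq sp sq pq; apply/eqP; rewrite -subr_eq0; apply/negPn/negP => nz.
have s_roots : all (root (p - q)) s.
  by apply/allP => x xs; rewrite rootE hornerD hornerN pq // subrr.
have := max_poly_roots nz s_roots s_uniq; rewrite leqNgt => /negP; apply.
by apply: leq_trans (size_polyD _ _) _; rewrite size_polyN geq_max sp sq.
Qed.

Lemma uniq_natr_iota (R : numDomainType) a n : uniq [seq i%:R : R | i <- iota a n].
Proof.
by rewrite map_inj_uniq ?iota_uniq // => i j /eqP; rewrite Num.Theory.eqr_nat => /eqP.
Qed.

Lemma size_sum_leq (R : nzSemiRingType) (I : eqType) (r : seq I) (P : pred I)
  (F : I -> {poly R}) m :
  (forall i, i \in r -> P i -> (size (F i) <= m)%N) ->
  (size (\sum_(i <- r | P i) F i)%R <= m)%N.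
Proof.
move=> H; apply: leq_trans (size_sum _ _ _) _.
exact/(bigmax_leqP_seq r P m (fun i => size (F i))).
Qed.

Lemma size_Xn_mul_XsubC1 (R : nzRingType) (j m : nat) :
  (size ('X^j * ('X - 1) ^+ m : {poly R})%R <= (j + m).+1)%N.
Proof.
have h1 := size_polyMleq ('X^j : {poly R}) (('X - 1) ^+ m).
have h2 := size_poly_exp_leq ('X - 1 : {poly R}) m.
rewrite -polyC1 size_XsubC in h2; rewrite size_polyXn -polyC1 in h1.
by apply: leq_trans h1 _; move: h2; move: (size _) => z; lia.
Qed.

(* The polynomial [(x - 1)^d C(x / (x - 1))]; it sends each path factor [x (x - 1)^(m - 1)]
   to [x], which is how [tau] is recovered from the chromatic polynomial. *)
Definition mobius (R : nzRingType) (d : nat) (C : {poly R}) : {poly R} :=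
  \sum_(j < d.+1) C`_j *: ('X^j * ('X - 1) ^+ (d - j)).

Lemma size_mobius (R : nzRingType) d (C : {poly R}) : (size (mobius d C) <= d.+1)%N.
Proof.
apply: size_sum_leq => j _ _; apply: leq_trans (size_scale_leq _ _) _.
by apply: leq_trans (size_Xn_mul_XsubC1 _ _ _) _; have := ltn_ord j; lia.
Qed.

Lemma horner_mobius (R : fieldType) d (C : {poly R}) x : (size C <= d.+1)%N -> x != 1 ->
  (mobius d C).[x] = (x - 1) ^+ d * C.[x / (x - 1)].
Proof.
move=> sC x1; rewrite (horner_coef_wide _ sC) mulr_sumr /mobius horner_sum.
apply: eq_bigr => j _; have x1' : x - 1 != 0 by rewrite subr_eq0.
rewrite hornerZ hornerM hornerXn horner_exp hornerD hornerN hornerX hornerC expr_div_n.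
have jd : (j <= d)%N by have := ltn_ord j; lia.
have -> : (x - 1) ^+ d = (x - 1) ^+ (d - j) * (x - 1) ^+ j by rewrite -exprD subnK.
have hj : (x - 1) ^+ j != 0 by rewrite expf_neq0.
by field.
Qed.

Lemma horner_mobius1 (R : comNzRingType) d (C : {poly R}) : (mobius d C).[1] = C`_d.
Proof.
rewrite /mobius horner_sum big_ord_recr /= big1 ?add0r.
  by rewrite hornerZ hornerM hornerXn horner_exp hornerD hornerN hornerX hornerC subnn
    !expr0 expr1n !mulr1.
move=> j _; rewrite hornerZ hornerM hornerXn horner_exp hornerD hornerN hornerX hornerC subrr.
by rewrite expr0n subn_eq0 leqNgt ltn_ord /= !mulr0.
Qed.

Lemma mobius_widen (R : numFieldType) (C : {poly R}) n N :
  (size C <= n.+1)%N -> (n <= N)%N -> mobius N C = ('X - 1) ^+ (N - n) * mobius n C.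
Proof.
move=> sC nN; apply: (eq_poly_on (uniq_natr_iota R 2 N.+1)).
- by rewrite size_map size_iota size_mobius.
- rewrite size_map size_iota; apply: leq_trans (size_polyMleq _ _) _.
  have h1 := size_poly_exp_leq ('X - 1 : {poly R}) (N - n).
  rewrite -polyC1 size_XsubC polyC1 in h1; have h2 := size_mobius n C.
  by move: h1 h2; move: (size _) (size _) => a b; lia.
move=> x /mapP [i]; rewrite mem_iota => /andP [i2 _] ->.
have x1 : i%:R != 1 :> R by rewrite Num.Theory.pnatr_eq1; lia.
rewrite hornerM horner_exp hornerD hornerN hornerX hornerC !horner_mobius //.
  by rewrite mulrA -exprD subnK.
exact: leq_trans sC _.
Qed.

Lemma dvdp_exp_XsubC_mul (R : idomainType) (a : R) (p : {poly R}) m k :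
  ~~ root p a -> (('X - a%:P) ^+ k %| ('X - a%:P) ^+ m * p) = (k <= m)%N.
Proof.
move=> pa; have Xa_neq0 : 'X - a%:P != 0 by rewrite polyXsubC_eq0.
apply/idP/idP => [dvd_k|le_km]; last by apply: dvdp_mulr; exact: dvdp_exp2l.
rewrite leqNgt; apply/negP => lt_mk.
have : ('X - a%:P) ^+ m * ('X - a%:P) %| ('X - a%:P) ^+ m * p.
  by apply: dvdp_trans dvd_k; rewrite -exprSr dvdp_exp2l.
by rewrite dvdp_mul2l ?expf_neq0 // dvdp_XsubCl (negbTE pa).
Qed.

Definition line_rel n : rel 'I_n := fun j k => (k == j.+1 :> nat) || (j == k.+1 :> nat).
Arguments line_rel n : clear implicits.

Definition lineX M n : {mpoly rat[M]} := chromX (line_rel n) (fun _ => 1%N) M.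

Lemma psums_cons n l : psums (n :: l) = 0%N :: map (addn n) (psums l).
Proof.
have H k m : [seq sumn (take i (n :: l)) | i <- iota m.+1 k] =
             [seq (n + sumn (take i l))%N | i <- iota m k].
  by elim: k m => //= k IH m; rewrite IH.
by rewrite /psums /= H -map_comp; congr (_ :: _ :: _); apply: eq_map.
Qed.

Lemma mem0_psums l : 0%N \in psums l.
Proof. by rewrite /psums /= take0 inE. Qed.

Lemma path_rel_cons n l (x y : 'I_n + 'I_(sumn l)) :
  @path_rel (n :: l) (unsplit x) (unsplit y) = sum_rel (line_rel n) (@path_rel l) x y.
Proof.
have notin_shift s z : (z < n)%N -> z \notin map (addn n) s.
  by move=> zn; apply/mapP => -[z0 _ hz]; move: zn; rewrite hz ltnNge leq_addr.
have in_shift s z : (n + z \in map (addn n) s) = (z \in s) by rewrite mem_map //; apply: addnI.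
rewrite /path_rel psums_cons in_cons negb_or; have := mem0_psums l; move: (psums l) => s s0.
case: x => [a|a]; case: y => [b|b] /=; have:= ltn_ord a; have := ltn_ord b => hb ha.
- rewrite /line_rel; case adj: (_ || _) => //=.
  have -> : (maxn a b == 0%N) = false by move: adj; lia.
  by rewrite notin_shift //; lia.
- apply/negbTE; rewrite negb_and; apply/orP.
  case adj: (_ || _) => //=; [right|by left].
  have -> : maxn a (n + b) = (n + 0)%N by move: adj; lia.
  by rewrite in_shift s0 andbF.
- apply/negbTE; rewrite negb_and; apply/orP.
  case adj: (_ || _) => //=; [right|by left].
  have -> : maxn (n + a) b = (n + 0)%N by move: adj; lia.
  by rewrite in_shift s0 andbF.
- have -> : maxn (n + a) (n + b) = (n + maxn a b)%N by lia.
  have -> : ((n + b == (n + a).+1) || (n + a == (n + b).+1)) =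
            ((b == a.+1 :> nat) || (a == b.+1 :> nat)) by lia.
  rewrite in_shift /line_rel; case adj: (_ || _) => //=.
  by have -> : (n + maxn a b == 0%N) = false by move: adj; lia.
Qed.

Lemma pathX_prod M l : pathX M l = \prod_(i <- l) lineX M i.
Proof.
elim: l => [|n l IH]; first by rewrite /pathX chromX_card0 ?big_nil // card_ord.
rewrite big_cons -IH /pathX /lineX -chromX_sum_rel.
symmetry; apply: (chromX_bij (h := @unsplit n (sumn l))).
- by exists (@split n (sumn l)); [exact: unsplitK | exact: splitK].
- exact: path_rel_cons.
- by case.
Qed.

Definition line_edges n : {set 'I_n * 'I_n} := [set p : 'I_n * 'I_n | p.2 == p.1.+1 :> nat].

Lemma proper_line n M (k : {ffun 'I_n -> 'I_M}) :
  Defs.proper (line_rel n) k = [forall p in line_edges n, k p.1 != k p.2].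
Proof.
apply/forallP/forallP => [H [u v]|H u]; rewrite ?inE /=.
  by apply/implyP => huv; apply: (implyP (forallP (H u) v)); rewrite /line_rel huv.
apply/forallP => v; apply/implyP; rewrite /line_rel => /orP [] h.
  by have := H (u, v); rewrite inE /= h.
by have := H (v, u); rewrite inE /= h eq_sym.
Qed.

Definition num_colourings (V : finType) (e : rel V) t :=
  (\sum_(k : {ffun V -> 'I_t} | Defs.proper e k) 1)%N.

Lemma meval_ones_diag_chromX (V : finType) (e : rel V) (w : V -> nat) t :
  (chromX e w t).@[@ones t t] = (num_colourings e t)%:R.
Proof.
rewrite /chromX (big_morph (meval (@ones t t)) (mevalD _) (meval0 _)) natr_sum.
apply: eq_bigr => k _; rewrite (big_morph (meval (@ones t t)) (mevalM _) (meval1 _)).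
by rewrite big1 // => v _; rewrite rmorphXn /= mevalXU /ones ltn_ord expr1n.
Qed.

Lemma proper_line_snoc n t (k : {ffun 'I_n.+1 -> 'I_t}) (c : 'I_t) :
  Defs.proper (line_rel n.+2)
    [ffun i : 'I_n.+2 => if unlift ord_max i is Some j then k j else c]
  = Defs.proper (line_rel n.+1) k && (c != k ord_max).
Proof.
have is_max (j : 'I_n.+1) : j == n :> nat -> j = ord_max by move=> /eqP jn; apply: val_inj.
apply/forallP/andP => [H|[/forallP H1 H2]].
  split.
    apply/forallP => u; apply/forallP => v; apply/implyP => euv.
    have := implyP (forallP (H (lift ord_max u)) (lift ord_max v)).
    by rewrite !ffunE !liftK; apply; move: euv; rewrite /line_rel !lift_max.
  have := implyP (forallP (H ord_max) (lift ord_max ord_max)).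
  by rewrite !ffunE liftK unlift_none; apply; rewrite /line_rel lift_max /= eqxx orbT.
move=> u; apply/forallP => v; apply/implyP.
case: (unliftP ord_max u) => [j ->|->]; case: (unliftP ord_max v) => [j' ->|->];
  rewrite !ffunE ?liftK ?unlift_none /line_rel ?lift_max /=.
- exact: (implyP (forallP (H1 j) j')).
- move=> hj; have jn : j == n :> nat.
    by have := ltn_ord j; move: hj; move: (nat_of_ord j) => x; lia.
  by rewrite (is_max j jn) eq_sym.
- move=> hj; have jn : j' == n :> nat.
    by have := ltn_ord j'; move: hj; move: (nat_of_ord j') => x; lia.
  by rewrite (is_max j' jn).
- by move=> /orP[] /eqP; lia.
Qed.

Lemma num_colourings_line n t : num_colourings (line_rel n.+1) t = (t * t.-1 ^ n)%N.
Proof.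
elim: n => [|n IH].
  rewrite /num_colourings (eq_bigl xpredT) ?sum1_card ?card_ffun ?card_ord ?muln1 //.
  by move=> k; apply/forallP => u; apply/forallP => v; rewrite /line_rel !ord1.
rewrite expnS mulnCA -IH mulnC /num_colourings big_distrl /=.
pose snoc (p : {ffun 'I_n.+1 -> 'I_t} * 'I_t) : {ffun 'I_n.+2 -> 'I_t} :=
  [ffun i => if unlift ord_max i is Some j then p.1 j else p.2].
have snoc_bij : bijective snoc.
  exists (fun k : {ffun 'I_n.+2 -> 'I_t} => ([ffun j => k (lift ord_max j)], k ord_max)).
    case=> k c; congr (_, _); first by apply/ffunP => j; rewrite !ffunE liftK.
    by rewrite ffunE unlift_none.
  move=> k; apply/ffunP => i; rewrite !ffunE.
  by case: (unliftP ord_max i) => [j ->|->]; rewrite ?ffunE.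
rewrite (reindex snoc) /=; last exact: onW_bij.
under eq_bigl => p do rewrite proper_line_snoc.
rewrite -(pair_big_dep xpredT
  (fun k c => Defs.proper (line_rel n.+1) k && (c != k ord_max)) (fun _ _ => 1%N)) /=.
rewrite [RHS]big_mkcond [LHS]big_mkcond /=; apply: eq_bigr => k _.
case: (Defs.proper (line_rel n.+1) k) => /=; last by rewrite big1.
rewrite mul1n sum1_card.
by have := cardC1 (k ord_max); rewrite card_ord => <-; apply: eq_card => i; rewrite !inE.
Qed.

Lemma chrom_poly_line n : chrom_poly (line_edges n.+1) = 'X * ('X - 1) ^+ n.
Proof.
apply: (eq_poly_on (uniq_natr_iota rat 0 n.+2)); rewrite ?size_map ?size_iota.
- by have := size_chrom_poly (line_edges n.+1); rewrite card_ord.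
- by have := size_Xn_mul_XsubC1 rat 1 n; rewrite expr1.
move=> _ /mapP [t _ ->].
rewrite -(meval_ones_chromX (@proper_line n.+1) (w := fun _ => 1%N) (M := t)) //.
rewrite meval_ones_diag_chromX num_colourings_line natrM natrX.
rewrite hornerM hornerX horner_exp hornerD hornerN hornerX hornerC.
by case: t => [|t]; rewrite ?mul0r //= -natr1 addrK.
Qed.

Definition path_poly (l : seq nat) : {poly rat} := \prod_(i <- l) ('X * ('X - 1) ^+ i.-1).

Lemma meval_ones_pathX M l t : (t <= M)%N -> all (fun i => 0 < i)%N l ->
  (pathX M l).@[@ones M t] = (path_poly l).[t%:R].
Proof.
move=> tM; rewrite pathX_prod (big_morph (meval (@ones M t)) (mevalM _) (meval1 _)).
rewrite /path_poly horner_prod; elim: l => [|[|i] l IH] //=; first by rewrite !big_nil.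
move=> /IH {}IH; rewrite !big_cons IH -chrom_poly_line.
by rewrite (meval_ones_chromX (@proper_line i.+1)).
Qed.

Lemma size_path_poly l : all (fun i => 0 < i)%N l -> (size (path_poly l) <= (sumn l).+1)%N.
Proof.
elim: l => [|i l IH] /=; first by rewrite /path_poly big_nil size_poly1.
case/andP => i_gt0 /IH {}IH; rewrite /path_poly big_cons.
apply: leq_trans (size_polyMleq _ _) _.
have := size_Xn_mul_XsubC1 rat 1 i.-1; rewrite expr1.
by move: IH; rewrite /path_poly; move: (size _) (size _) => a b; lia.
Qed.

Lemma horner_path_poly (x : rat) l : x != 1 -> all (fun i => 0 < i)%N l ->
  (x - 1) ^+ sumn l * (path_poly l).[x / (x - 1)] = x ^+ size l.
Proof.
move=> x1; have x1' : x - 1 != 0 by rewrite subr_eq0.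
set y := x / (x - 1).
have xy : (x - 1) * y = x by rewrite /y; field.
have xy1 : (x - 1) * (y - 1) = 1 by rewrite /y; field.
elim: l => [|[|i] l IH] //=; first by rewrite /path_poly big_nil hornerC !expr0 mul1r.
move=> /IH {}IH; rewrite /path_poly big_cons exprS -IH -/(path_poly l) /=.
rewrite !(hornerM, horner_exp, hornerD, hornerN, hornerX, hornerC).
transitivity (((x - 1) * y) * ((x - 1) * (y - 1)) ^+ i *
  ((x - 1) ^+ sumn l * (path_poly l).[y])); last by rewrite xy xy1 expr1n mulr1.
by rewrite exprMn addSn exprS exprD; ring.
Qed.

Definition full_line n : {ffun 'I_n * 'I_n -> bool} := [ffun p => p \in line_edges n].

Lemma comp_root_full_line n (v : 'I_n.+1) :
  comp_root (full_line n.+1) v = comp_root (full_line n.+1) ord0.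
Proof.
apply/esym/comp_rootP; case: v => m; elim: m => [|m IHm] m_lt.
  by rewrite (_ : Ordinal m_lt = ord0) //; apply: val_inj.
apply: (connect_trans (IHm (ltnW m_lt))); apply: connect1.
by rewrite /span_rel ffunE inE /= eqxx.
Qed.

Lemma prod_power_sum_full_line M n :
  \prod_(r : fixpoint (comp_root (full_line n.+1)))
    power_sum M (\sum_(v | comp_root (full_line n.+1) v == val r) 1) = power_sum M n.+1.
Proof.
rewrite (big_pred1 (to_fixpoint (@comp_rootK _ (full_line n.+1)) ord0)).
  congr (power_sum M _); rewrite /= (eq_bigl xpredT) ?sum1_card ?card_ord //.
  by move=> v; rewrite comp_root_full_line eqxx.
move=> r; apply/esym/eqP/val_inj => /=.
by rewrite -(eqP (valP r)) comp_root_full_line.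
Qed.

(* Removing the edge [(j, j + 1)] from the path separates [{v <= j}] from the rest. *)
Lemma card_comp_lt_line n S (r : 'I_n.+1) :
  sub_edges (line_edges n.+1) S -> S != full_line n.+1 ->
  (#|[pred v | comp_root S v == r]| < n.+1)%N.
Proof.
move=> sS nS.
have [p Sp_full] : exists p, S p != full_line n.+1 p.
  apply/existsP; apply: contraR nS => /existsPn H.
  by apply/eqP/ffunP => p; apply/eqP; have := H p; rewrite negbK.
have Sp : S p = false.
  by apply/negbTE/negP => Sp; move: Sp_full; rewrite Sp ffunE (implyP (forallP sS p) Sp).
have /eqP p2 : p.2 == p.1.+1 :> nat.
  by move: Sp_full; rewrite Sp ffunE inE; case: (nat_of_ord p.2 == _).
pose A := [pred v : 'I_n.+1 | (v <= p.1)%N].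
have A_closed : closed (span_rel S) A.
  have key x y : S (x, y) -> (x \in A) = (y \in A).
    move=> Sxy; have /eqP y_x : y == x.+1 :> nat.
      by have := implyP (forallP sS _) Sxy; rewrite inE.
    have x_p : x != p.1 :> nat.
      apply: contraTneq Sxy => x_p; suff -> : (x, y) = p by rewrite Sp.
      case: p {Sp_full Sp A} p2 x_p y_x => a b /= ? ? ?.
      by congr (_, _); apply: val_inj => /=; lia.
    by rewrite !inE y_x; move: x_p; lia.
  by move=> x y /orP [] Sxy; [exact: key | rewrite (key _ _ Sxy)].
set C := [pred v | comp_root S v == r].
have comp_lt x : x \notin C -> (#|C| < n.+1)%N.
  by move=> nx; have := max_card [predU1 x & C]; rewrite cardU1 nx card_ord.
case: (boolP (comp_root S p.1 == r)) => [/eqP r1|]; last exact: comp_lt.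
apply: (comp_lt p.2); rewrite inE -r1; apply/negP => /eqP /esym /comp_rootP.
by move/(closed_connect A_closed); rewrite !inE p2 leqnn ltnn.
Qed.

Lemma is_partition_sort_cat a b l l' : is_partition a l -> is_partition b l' ->
  is_partition (a + b) (sort geq (l ++ l')).
Proof.
rewrite /is_partition => /andP [/andP [_ l_pos] /eqP <-] /andP [/andP [_ l'_pos] /eqP <-].
have ll' : perm_eq (sort geq (l ++ l')) (l ++ l') := permEl (perm_sort _ _).
have sorted_ll' : sorted geq (sort geq (l ++ l')) by apply: sort_sorted => x y /=; exact: leq_total.
by rewrite sorted_ll' (perm_all _ ll') all_cat l_pos l'_pos (perm_sumn ll') sumn_cat eqxx.
Qed.

Section PathSpan.
Variable M : nat.

Definition path_span d (f : {mpoly rat[M]}) :=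
  exists c, all (is_partition d) (unzip1 c) /\ f = \sum_(p <- c) p.2 *: pathX M p.1.

Lemma path_span0 d : path_span d 0.
Proof. by exists [::]; rewrite big_nil. Qed.

Lemma path_spanD d f g : path_span d f -> path_span d g -> path_span d (f + g).
Proof.
move=> [c1 [h1 ->]] [c2 [h2 ->]]; exists (c1 ++ c2).
by rewrite /unzip1 map_cat all_cat h1 h2 big_cat.
Qed.

Lemma path_spanZ d a f : path_span d f -> path_span d (a *: f).
Proof.
move=> [c [h ->]]; exists [seq (p.1, a * p.2) | p <- c]; split; first by rewrite /unzip1 -map_comp.
by rewrite big_map scaler_sumr; apply: eq_bigr => p _; rewrite scalerA.
Qed.

Lemma path_span_pathX d l : is_partition d l -> path_span d (pathX M l).
Proof. by move=> h; exists [:: (l, 1)]; rewrite /= h big_seq1 scale1r. Qed.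

Lemma path_spanM a b f g : path_span a f -> path_span b g -> path_span (a + b) (f * g).
Proof.
move=> [c1 [h1 ->]] [c2 [h2 ->]]; rewrite big_distrlr /= big_seq.
apply: (big_ind (path_span _)); [exact: path_span0 | exact: path_spanD |] => p1 p1c.
rewrite big_seq; apply: (big_ind (path_span _)); [exact: path_span0 | exact: path_spanD |].
move=> p2 p2c; rewrite -scalerAl -scalerAr scalerA; apply: path_spanZ.
rewrite !pathX_prod -big_cat -(perm_big _ (permEl (perm_sort geq _))) -pathX_prod.
by apply/path_span_pathX/is_partition_sort_cat; [apply: (allP h1) | apply: (allP h2)];
  apply: map_f.
Qed.

Lemma path_span_prod (I : finType) (P : pred I) (W : I -> nat) :
  (forall i, P i -> path_span (W i) (power_sum M (W i))) ->
  path_span (\sum_(i | P i) W i) (\prod_(i | P i) power_sum M (W i)).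
Proof.
move=> H; apply: (big_ind2 (fun f d => path_span d f)) => //.
  have -> : 1 = pathX M [::] by rewrite pathX_prod big_nil.
  exact: path_span_pathX.
by move=> f1 d1 f2 d2; apply: path_spanM.
Qed.

(* Stanley's expansion of a path on [n] vertices expresses [p_n] through [X_{P_n}] and
   products of power sums of smaller degrees. *)
Lemma path_span_power_sum n : (0 < n)%N -> path_span n (power_sum M n).
Proof.
elim/ltn_ind: n => -[//|n] IH _.
set rest := \sum_(S | sub_edges (line_edges n.+1) S && (S != full_line n.+1)) edge_sign S *:
  \prod_(r : fixpoint (comp_root S)) power_sum M (\sum_(v | comp_root S v == val r) 1).
have full_sub : sub_edges (line_edges n.+1) (full_line n.+1).
  by apply/forallP => p; rewrite ffunE; apply/implyP.
have stanley : lineX M n.+1 = edge_sign (full_line n.+1) *: power_sum M n.+1 + rest.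
  by rewrite /lineX (chromX_stanley (@proper_line n.+1)) (bigD1 _ full_sub)
    prod_power_sum_full_line.
have rest_span : path_span n.+1 rest.
  apply: (big_ind (path_span _)); [exact: path_span0 | exact: path_spanD |].
  move=> S /andP [sS nS]; apply: path_spanZ.
  rewrite -[X in path_span X](card_ord n.+1) -sum1_card -(sum_fibre_weights (@comp_rootK _ S)).
  apply: path_span_prod => r _; apply: IH; last exact: fibre_weight_gt0.
  by rewrite sum1_card card_comp_lt_line.
have line_span : path_span n.+1 (lineX M n.+1).
  have -> : lineX M n.+1 = pathX M [:: n.+1] by rewrite pathX_prod big_seq1.
  by apply: path_span_pathX; rewrite /is_partition /= addn0.
have -> : power_sum M n.+1 = edge_sign (full_line n.+1) *: (lineX M n.+1 - rest).
  by rewrite stanley addrK scalerA edge_sign_sqr scale1r.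
by apply/path_spanZ/path_spanD => //; rewrite -scaleN1r; apply: path_spanZ.
Qed.

End PathSpan.

Section Partitions.
Variables (d : nat) (l : seq nat).
Hypothesis l_part : is_partition d l.

Lemma partition_pos : all (fun i => 0 < i)%N l.
Proof. by case/andP: l_part => /andP []. Qed.

Lemma partition_sum : sumn l = d.
Proof. by case/andP: l_part => _ /eqP. Qed.

Lemma size_partition : (size l <= d)%N.
Proof.
rewrite -partition_sum; have := partition_pos.
by elim: (l) => //= i s IH /andP [i_gt0 /IH]; lia.
Qed.

End Partitions.

Lemma size_path_poly_comb d (c : seq (seq nat * rat)) : all (is_partition d) (unzip1 c) ->
  (size (\sum_(p <- c) p.2 *: path_poly p.1)%R <= d.+1)%N.
Proof.
move=> c_part; apply: size_sum_leq => p pc _; apply: leq_trans (size_scale_leq _ _) _.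
have p_part : is_partition d p.1 by apply: (allP c_part); apply: map_f.
by have := size_path_poly (partition_pos p_part); rewrite (partition_sum p_part).
Qed.

Lemma mobius_path_poly_comb d (c : seq (seq nat * rat)) : all (is_partition d) (unzip1 c) ->
  mobius d (\sum_(p <- c) p.2 *: path_poly p.1) = \sum_(p <- c) p.2 *: 'X^(size p.1).
Proof.
move=> c_part; have p_part p : p \in c -> is_partition d p.1.
  by move=> pc; apply: (allP c_part); apply: map_f.
apply: (eq_poly_on (uniq_natr_iota rat 2 d.+1)); rewrite ?size_map ?size_iota.
- exact: size_mobius.
- apply: size_sum_leq => p pc _; apply: leq_trans (size_scale_leq _ _) _.
  by rewrite size_polyXn ltnS (size_partition (p_part p pc)).
move=> x /mapP [i]; rewrite mem_iota => /andP [i2 _] ->.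
have x1 : i%:R != 1 :> rat by rewrite Num.Theory.pnatr_eq1; lia.
rewrite horner_mobius ?size_path_poly_comb // !horner_sum mulr_sumr.
rewrite big_seq [RHS]big_seq; apply: eq_bigr => p pc.
rewrite !hornerZ hornerXn mulrCA -(partition_sum (p_part p pc)).
by rewrite horner_path_poly ?(partition_pos (p_part p pc)).
Qed.

(* Whichever expansion [tau] picks, its value is fixed by the specialisations [f(1^t)]. *)
Lemma tau_mobius d (f : {mpoly rat[d]}) (C : {poly rat}) :
  path_span d f -> (size C <= d.+1)%N ->
  (forall t, (t <= d)%N -> f.@[@ones d t] = C.[t%:R]) -> tau f = mobius d C.
Proof.
move=> f_span sC f_C; rewrite /tau; case: excluded_middle_informative => [h|[]//].
case: (constructive_indefinite_description _ h) => c [c_part f_c] /=.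
rewrite -(mobius_path_poly_comb c_part); congr (mobius d _).
apply: (eq_poly_on (uniq_natr_iota rat 0 d.+1)); rewrite ?size_map ?size_iota //.
  exact: size_path_poly_comb.
move=> x /mapP [t]; rewrite mem_iota => /andP [_ td] ->.
rewrite -f_C // f_c (big_morph (meval (@ones d t)) (mevalD _) (meval0 _)) horner_sum.
rewrite big_seq [RHS]big_seq; apply: eq_bigr => p pc.
have p_part : is_partition d p.1 by apply: (allP c_part); apply: map_f.
by rewrite mevalZ hornerZ meval_ones_pathX // (partition_pos p_part).
Qed.

Lemma card_le_total_weight (V : finType) (w : V -> nat) :
  (forall v, 0 < w v)%N -> (#|V| <= total_weight w)%N.
Proof. by move=> w_gt0; rewrite /total_weight -sum1_card; apply: leq_sum. Qed.

Section SimpleGraph.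
Variables (V : finType) (e : rel V).
Hypothesis e_simple : simple_graph e.

Definition graph_edges : {set V * V} :=
  [set p : V * V | e p.1 p.2 && (enum_rank p.1 < enum_rank p.2)%N].

Lemma proper_graph M (k : {ffun V -> 'I_M}) :
  Defs.proper e k = [forall p in graph_edges, k p.1 != k p.2].
Proof.
case: e_simple => e_sym e_irr.
apply/forallP/forallP => [H [u v]|H u]; rewrite ?inE /=.
  by apply/implyP => /andP [euv _]; apply: (implyP (forallP (H u) v)).
apply/forallP => v; apply/implyP => euv.
case: (ltngtP (enum_rank u) (enum_rank v)) => h.
- by have := H (u, v); rewrite inE /= euv h.
- by have := H (v, u); rewrite inE /= -e_sym euv h eq_sym.
- by move: euv; rewrite (enum_rank_inj (val_inj h)) e_irr.
Qed.

Lemma graph_edges_loopless p : p \in graph_edges -> p.1 != p.2.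
Proof. by rewrite inE => /andP [_]; apply: contraTneq => ->; rewrite ltnn. Qed.

Lemma path_span_chromX (w : V -> nat) M :
  (forall v, 0 < w v)%N -> path_span (\sum_v w v) (chromX e w M).
Proof.
move=> w_gt0; rewrite (chromX_stanley proper_graph).
apply: (big_ind (path_span _)); [exact: path_span0 | exact: path_spanD |] => S _.
apply: path_spanZ; rewrite -(sum_fibre_weights (@comp_rootK _ S)).
apply: path_span_prod => r _; apply: path_span_power_sum; exact: fibre_weight_gt0.
Qed.

Lemma tau_chromX (w : V -> nat) :
  (forall v, 0 < w v)%N -> tau_w e w = mobius (total_weight w) (chrom_poly graph_edges).
Proof.
move=> w_gt0; apply: tau_mobius; first exact: path_span_chromX.
  by apply: leq_trans (size_chrom_poly _) _; rewrite ltnS card_le_total_weight.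
by move=> t tN; apply: (meval_ones_chromX proper_graph).
Qed.

End SimpleGraph.

Theorem theorem4p1 (V : finType) (e : rel V) (w : V -> nat) :
  simple_graph e -> (forall v, (0 < w v)%N) ->
  [/\ tau_w e w = ('X - 1) ^+ (total_weight w - #|V|) * tau_G e,
      (tau_G e).[1] != 0
    & forall k : nat, (('X - 1) ^+ k %| tau_w e w) = (k <= total_weight w - #|V|)%N].
Proof.
move=> e_simple w_gt0.
have tau_G_mobius : tau_G e = mobius #|V| (chrom_poly (graph_edges e)).
  have := tau_chromX e_simple (w := fun _ => 1%N) (fun _ => isT).
  by rewrite /tau_w /total_weight sum1_card.
have tau_w_G : tau_w e w = ('X - 1) ^+ (total_weight w - #|V|) * tau_G e.
  have V_le_N := card_le_total_weight w_gt0.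
  by rewrite tau_G_mobius tau_chromX // (mobius_widen (size_chrom_poly _) V_le_N).
have tau_G1 : (tau_G e).[1] != 0.
  by rewrite tau_G_mobius horner_mobius1 lead_coef_chrom_poly ?oner_neq0 //;
    exact: graph_edges_loopless.
by split=> // k; rewrite tau_w_G -polyC1 dvdp_exp_XsubC_mul.
Qed.
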